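(* Let $k\ge0$ and let $A$ be a real symmetric positive semidefinite matrix indexed by $\mathcal{F}'_k$ such that $A_{F_1,G_1}=A_{F_2,G_2}$ whenever $F_1G_1\simeq F_2G_2$. Then every entry of $A$ lies in the interval $[0,A_{U_k,U_k}]$, where $U_k$ is the edgeless graph on $[k]$.
   Context: $\mathcal{F}'_k$ denotes the set of flat $k$-labeled graphs, i.e. graphs on node set $[k]$ with all nodes labeled $1,\dots,k$. For $F,G\in\mathcal{F}'_k$, $FG$ is the graph on $[k]$ with edge set $E(F)\cup E(G)$. For graphs $F,G$, $F\simeq G$ means they become isomorphic after deleting their isolated nodes. *)

From HB Require Import structures.
From mathcomp Require Import all_boot all_order all_algebra.
Set Implicit Arguments. Unset Strict Implicit. Unset Printing Implicit Defensive.
Import Order.TTheory GRing.Theory Num.Theory.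

Definition is_simple_edgeset (k : nat) (E : {set {set 'I_k}}) : bool :=
  [forall e in E, #|e| == 2].

(* F'_k : flat k-labeled graphs (all nodes labeled), i.e. simple graphs on [k]. *)
Definition flat (k : nat) := {E : {set {set 'I_k}} | is_simple_edgeset E}.

Definition edges (k : nat) (F : flat k) : {set {set 'I_k}} := val F.

(* Edge set of the product FG : union of edge sets (node set [k]). *)
Definition flat_mul_edges (k : nat) (F G : flat k) : {set {set 'I_k}} :=
  edges F :|: edges G.

Definition nonisolated (k : nat) (E : {set {set 'I_k}}) : {set 'I_k} :=
  [set v | [exists e in E, v \in e]].

(* F ~= G : isomorphic after deleting isolated nodes, i.e. there is a map
   which is a bijection from the non-isolated nodes of F onto those of G
   carrying the edge set of F exactly onto the edge set of G. *)
Definition iso_up_to_isolated (k : nat) (E1 E2 : {set {set 'I_k}}) : Prop :=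
  exists f : 'I_k -> 'I_k,
    {in nonisolated E1 &, injective f} /\
    [set (f @: (e : {set 'I_k})) | e in E1] = E2.

Lemma edgeless_simple (k : nat) : is_simple_edgeset (set0 : {set {set 'I_k}}).
Proof. by apply/forall_inP => e; rewrite in_set0. Qed.

Definition edgeless (k : nat) : flat k := exist _ set0 (edgeless_simple k).

From HB Require Import structures.
From mathcomp Require Import all_boot all_order all_algebra.
Import Order.TTheory GRing.Theory Num.Theory.
Set Implicit Arguments. Unset Strict Implicit. Unset Printing Implicit Defensive.
Local Open Scope ring_scope.

(* Let H = FG be the union graph.  Since FG and HH have the same
   edge set, and so do FG and HU (U the edgeless graph), the isomorphism
   invariance of A gives A F G = A H H = A H U.  Positive semidefiniteness is
   then used through two test vectors on the index set:
   - the indicator of H gives 0 <= A H H;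
   - the difference of the indicators of U and H gives
     A U U - 2 A U H + A H H >= 0, i.e. A F G <= A U U. *)

Section PsdMatrix.

Variables (R : realFieldType) (T : finType) (A : T -> T -> R).

Definition bilin (x y : T -> R) : R :=
  \sum_(i : T) \sum_(j : T) x i * A i j * y j.

Definition delta (a : T) : T -> R := fun i => (i == a)%:R.

Lemma sum_delta (a : T) (f : T -> R) : \sum_(i : T) f i * delta a i = f a.
Proof.
rewrite (bigD1 a) //= /delta eqxx mulr1 big1 ?addr0 // => i /negbTE ->.
by rewrite mulr0.
Qed.

Lemma bilin_delta (a b : T) : bilin (delta a) (delta b) = A a b.
Proof.
rewrite /bilin; under eq_bigr => i _ do rewrite sum_delta.
by under eq_bigr => i _ do rewrite mulrC; rewrite sum_delta.
Qed.

Lemma bilinBl (x x' y : T -> R) :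
  bilin (fun i => x i - x' i) y = bilin x y - bilin x' y.
Proof.
rewrite /bilin -sumrB; apply: eq_bigr => i _.
by rewrite -sumrB; apply: eq_bigr => j _; rewrite !mulrBl.
Qed.

Lemma bilinBr (x y y' : T -> R) :
  bilin x (fun j => y j - y' j) = bilin x y - bilin x y'.
Proof.
rewrite /bilin -sumrB; apply: eq_bigr => i _.
by rewrite -sumrB; apply: eq_bigr => j _; rewrite mulrBr.
Qed.

Hypothesis A_psd : forall x : T -> R, 0 <= bilin x x.

Lemma psd_diag_ge0 (a : T) : 0 <= A a a.
Proof. by rewrite -bilin_delta. Qed.

(* The 2x2 principal minor condition along e_a - e_b. *)
Lemma psd_two_point (a b : T) : 0 <= A a a - A a b - A b a + A b b.
Proof.
have := A_psd (fun i => delta a i - delta b i).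
rewrite bilinBl !bilinBr !bilin_delta.
by rewrite opprB addrA addrAC.
Qed.

End PsdMatrix.

Lemma iso_refl (k : nat) (E : {set {set 'I_k}}) : iso_up_to_isolated E E.
Proof.
exists id; split; first by move=> ? ? ? ?.
by rewrite (eq_imset (g := id)) ?imset_id // => e; exact: imset_id.
Qed.

Lemma union_simple (k : nat) (F G : flat k) :
  is_simple_edgeset (edges F :|: edges G).
Proof.
apply/forall_inP => e; rewrite in_setU => /orP [] e_in.
- exact: (forall_inP (valP F) e e_in).
- exact: (forall_inP (valP G) e e_in).
Qed.

Definition flat_mul (k : nat) (F G : flat k) : flat k :=
  exist _ (flat_mul_edges F G) (union_simple F G).

Lemma flat_mul_edges_idem (k : nat) (F G : flat k) :
  flat_mul_edges (flat_mul F G) (flat_mul F G) = flat_mul_edges F G.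
Proof. by rewrite /flat_mul_edges /edges /= setUid. Qed.

Lemma flat_mul_edges_edgeless (k : nat) (F G : flat k) :
  flat_mul_edges (flat_mul F G) (edgeless k) = flat_mul_edges F G.
Proof. by rewrite /flat_mul_edges /edges /= setU0. Qed.

Theorem mainTheorem8 (R : realFieldType) (k : nat) (A : flat k -> flat k -> R) :
  (forall F G, A F G = A G F) ->
  (forall x : flat k -> R, 0 <= \sum_(F : flat k) \sum_(G : flat k) x F * A F G * x G) ->
  (forall F1 G1 F2 G2,
      iso_up_to_isolated (flat_mul_edges F1 G1) (flat_mul_edges F2 G2) ->
      A F1 G1 = A F2 G2) ->
  forall F G, 0 <= A F G /\ A F G <= A (edgeless k) (edgeless k).
Proof.
move=> A_sym A_psd A_iso F G.
set U := edgeless k; set H := flat_mul F G.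
have AFG_HH : A F G = A H H.
  by apply: A_iso; rewrite flat_mul_edges_idem; exact: iso_refl.
have AFG_HU : A F G = A H U.
  by apply: A_iso; rewrite flat_mul_edges_edgeless; exact: iso_refl.
split; first by rewrite AFG_HH; exact: psd_diag_ge0.
have := psd_two_point A_psd U H.
rewrite (A_sym U H) -AFG_HU -AFG_HH.
by rewrite subrK subr_ge0.
Qed.
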